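(* Let $n\ge1$, $D\ge1$, and let $X_n=\{\mathbf{x}^0,\ldots,\mathbf{x}^{n-1}\}\subseteq\{0,1\}^D$ consist of $n$ pairwise distinct vectors, indexed so that $\mathbf{a}\cdot\mathbf{x}^0<\cdots<\mathbf{a}\cdot\mathbf{x}^{n-1}$ for some $\mathbf{a}\in\mathbb{Z}^D$. Then there is a three-layer Boolean threshold network with $D$ input nodes, $n$ nodes in the second layer and $\lceil\log_2 n\rceil$ output nodes that maps $\mathbf{x}^i$ to the $\lceil\log_2 n\rceil$-dimensional binary representation of $i$, for every $i=0,\ldots,n-1$.
   Context: A Boolean threshold function is a map $\{0,1\}^h\to\{0,1\}$, $\mathbf{u}\mapsto[\mathbf{w}\cdot\mathbf{u}\ge\theta]$ (value $1$ iff $\mathbf{w}\cdot\mathbf{u}\ge\theta$) with $\mathbf{w}\in\mathbb{Z}^h,\theta\in\mathbb{Z}$. An $L$-layer Boolean threshold network has layers $1,\ldots,L$; layer $1$ is the input; each node of layer $t+1$ computes a Boolean threshold function of the values of layer $t$; the network computes the map input $\mapsto$ values of layer $L$. *)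

From mathcomp Require Import all_boot all_order all_algebra.
Set Implicit Arguments. Unset Strict Implicit. Unset Printing Implicit Defensive.
Import GRing.Theory Num.Theory.
Local Open Scope ring_scope.

Definition threshold (h : nat) (w : 'I_h -> int) (theta : int)
  (u : 'I_h -> bool) : bool :=
  theta <= \sum_(k < h) w k * (u k)%:R.

Definition layer (h h' : nat) (W : 'I_h' -> 'I_h -> int) (Th : 'I_h' -> int)
  (u : 'I_h -> bool) : 'I_h' -> bool :=
  fun j => threshold (W j) (Th j) u.

Definition net3 (h1 h2 h3 : nat)
  (W1 : 'I_h2 -> 'I_h1 -> int) (T1 : 'I_h2 -> int)
  (W2 : 'I_h3 -> 'I_h2 -> int) (T2 : 'I_h3 -> int)
  (u : 'I_h1 -> bool) : 'I_h3 -> bool :=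
  layer W2 T2 (layer W1 T1 u).

Definition dotb (D : nat) (a : 'I_D -> int) (x : 'I_D -> bool) : int :=
  \sum_(k < D) a k * (x k)%:R.

(* ceil(log2 n) (= up_log 2 n: smallest e with n <= 2^e). *)
Definition clog2 (n : nat) : nat := up_log 2 n.

(* The m-bit binary representation of i: bit j is the coefficient of 2^j. *)
Definition binrep (m i : nat) : 'I_m -> bool := fun j => odd (i %/ 2 ^ j).

From mathcomp Require Import all_boot all_order all_algebra.
Import Order.TTheory GRing.Theory Num.Theory.
Set Implicit Arguments. Unset Strict Implicit. Unset Printing Implicit Defensive.
Local Open Scope ring_scope.

(* The first layer has one gate per point: gate j fires on x^i iff
   a.x^j <= a.x^i, i.e. iff j <= i, so it writes i in unary ("thermometer")
   code.  Any Boolean function f of i is then a single threshold gate of this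
   code: give gate j the weight f(j) - f(j-1); on the code of i these weights
   telescope to f(i) in {0,1}, and threshold 1 reads it off.  Taking f to be
   the b-th binary digit gives the output layer. *)

Section Increments.

Variable R : pzRingType.
Implicit Type f : nat -> R.

Definition increment f (j : nat) : R := f j - (if j is k.+1 then f k else 0).

Lemma sum_increment f (i : nat) : \sum_(j < i.+1) increment f j = f i.
Proof.
elim: i => [|i IHi]; first by rewrite big_ord1 /increment subr0.
by rewrite big_ord_recr IHi /= /increment addrC subrK.
Qed.

Lemma sum_increment_thermometer f (h i : nat) : (i < h)%N ->
  \sum_(j < h) increment f j * (j <= i)%N%:R = f i.
Proof.
move=> lt_ih.
rewrite -(sum_increment f) (big_ord_widen _ _ lt_ih) [RHS]big_mkcond.
by apply: eq_bigr => j _; rewrite ltnS; case: (j <= i)%N; rewrite ?mulr1 ?mulr0.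
Qed.

End Increments.

Lemma threshold_increment_thermometer (h : nat) (f : nat -> bool)
    (i : nat) (u : 'I_h -> bool) :
  (i < h)%N -> (forall j : 'I_h, u j = (j <= i)%N) ->
  threshold (fun j : 'I_h => increment (fun k => (f k)%:R) j) 1 u = f i.
Proof.
move=> lt_ih u_code; rewrite /threshold.
under eq_bigr => j _ do rewrite u_code.
by rewrite sum_increment_thermometer //; case: (f i).
Qed.

Lemma threshold_dotb_sorted (D n : nat) (a : 'I_D -> int)
    (x : 'I_n -> 'I_D -> bool) :
  {homo (fun i => dotb a (x i)) : i j / (i < j)%N >-> i < j} ->
  forall i j : 'I_n, threshold a (dotb a (x j)) (x i) = (j <= i)%N.
Proof. by move=> /le_mono dotb_mono i j; apply: dotb_mono. Qed.

Theorem theorem14 (n D : nat) (hn : (1 <= n)%N) (hD : (1 <= D)%N)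
  (x : 'I_n -> 'I_D -> bool) (a : 'I_D -> int)
  (hdist : injective x)
  (hx : forall i j : 'I_n, (i < j)%N -> dotb a (x i) < dotb a (x j)) :
  exists (W1 : 'I_n -> 'I_D -> int) (T1 : 'I_n -> int)
         (W2 : 'I_(clog2 n) -> 'I_n -> int) (T2 : 'I_(clog2 n) -> int),
    forall i : 'I_n, net3 W1 T1 W2 T2 (x i) =1 @binrep (clog2 n) i.
Proof.
exists (fun _ => a), (fun j => dotb a (x j)),
  (fun b j => increment (fun k => (odd (k %/ 2 ^ b))%:R) j), (fun _ => 1).
move=> i b.
apply: threshold_increment_thermometer => // j.
exact: threshold_dotb_sorted.
Qed.
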